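(* Let $\alpha=(\alpha_1,\dots,\alpha_n)$ and $\beta=(\beta_1,\dots,\beta_n)$ be two probability vectors on $n$ points (in the paper $\alpha_i=P_F(u_i\mid s)$, $\beta_i=P_F(v_i\mid s')$), and let $\mathbf{C}'\in\mathbb{R}^{n\times n}$ be a diagonal matrix with $\mathbf{C}'_{ii}\le 0$ for all $i$. Then $$\min_{\pi\in\Pi(\alpha,\beta)}\langle\mathbf{C}',\pi\rangle=\sum_{i=1}^n\min(\alpha_i,\beta_i)\,\mathbf{C}'_{ii},$$ where $\Pi(\alpha,\beta)=\{\pi\in\mathbb{R}_{+}^{n\times n}:\pi\mathbf{1}_n=\alpha,\ \pi^{\top}\mathbf{1}_n=\beta\}$ and $\langle\mathbf{C}',\pi\rangle=\sum_{i,j}\mathbf{C}'_{ij}\pi_{ij}$. *)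

From mathcomp Require Import all_boot all_order all_algebra.
Set Implicit Arguments. Unset Strict Implicit. Unset Printing Implicit Defensive.
Import Order.TTheory GRing.Theory Num.Theory.
Local Open Scope ring_scope.

Definition prob_vec (R : realFieldType) (n : nat) (a : 'I_n -> R) : Prop :=
  (forall i, 0 <= a i) /\ \sum_(i < n) a i = 1.

Definition coupling (R : realFieldType) (n : nat) (a b : 'I_n -> R)
  (p : 'M[R]_n) : Prop :=
  (forall i j, 0 <= p i j) /\
  (forall i, \sum_(j < n) p i j = a i) /\
  (forall j, \sum_(i < n) p i j = b j).

Definition frob (R : realFieldType) (n : nat) (C p : 'M[R]_n) : R :=
  \sum_(i < n) \sum_(j < n) C i j * p i j.

From mathcomp Require Import all_boot all_order all_algebra.
Import Order.TTheory GRing.Theory Num.Theory.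
Set Implicit Arguments. Unset Strict Implicit. Unset Printing Implicit Defensive.
Local Open Scope ring_scope.

(* A diagonal cost only sees the diagonal of a coupling, and the row and column
   constraints force [pi i i <= min (alpha i) (beta i)]; with nonpositive costs
   this gives the lower bound.  It is attained by the maximal coupling, which
   puts [min (alpha i) (beta i)] on the diagonal and spreads the residual masses
   [alpha - min] and [beta - min] as a normalised product; the two residuals
   have disjoint supports, so the product part vanishes on the diagonal. *)

Lemma frob_diag (R : realFieldType) (n : nat) (C p : 'M[R]_n) :
  (forall i j : 'I_n, i != j -> C i j = 0) ->
  frob C p = \sum_(i < n) C i i * p i i.
Proof.
move=> Cdiag; apply: eq_bigr => i _.
rewrite (bigD1 i) //= big1 ?addr0 // => j ji.
by rewrite Cdiag ?mul0r // eq_sym.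
Qed.

Lemma coupling_diag_le_min (R : realFieldType) (n : nat) (a b : 'I_n -> R)
    (p : 'M[R]_n) (i : 'I_n) :
  coupling a b p -> p i i <= Num.min (a i) (b i).
Proof.
move=> [p0 [prow pcol]]; rewrite le_min; apply/andP; split.
  by rewrite -(prow i) (bigD1 i) //= lerDl sumr_ge0.
by rewrite -(pcol i) (bigD1 i) //= lerDl sumr_ge0.
Qed.

Lemma subr_min_mul0 (R : realDomainType) (x y : R) :
  (x - Num.min x y) * (y - Num.min x y) = 0.
Proof. by case: (leP x y) => _; rewrite subrr ?mul0r ?mulr0. Qed.

Lemma psumr_mulfV (R : realFieldType) (n : nat) (x : 'I_n -> R) (i : 'I_n) :
  (forall j, 0 <= x j) -> x i * ((\sum_(j < n) x j) / \sum_(j < n) x j) = x i.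
Proof.
move=> x0; have [s0|sn0] := eqVneq (\sum_(j < n) x j) 0; last by rewrite divff ?mulr1.
move: s0 => /eqP; rewrite psumr_eq0 // => /allP/(_ i (mem_index_enum i))/eqP->.
by rewrite mul0r.
Qed.

Section MaximalCoupling.

Variables (R : realFieldType) (n : nat) (a b : 'I_n -> R).

Let m i := Num.min (a i) (b i).
Let ra i := a i - m i.
Let rb i := b i - m i.

Definition maximal_coupling : 'M[R]_n :=
  \matrix_(i, j) ((i == j)%:R * m i + ra i * rb j / \sum_(k < n) ra k).

Lemma maximal_coupling_diag i : maximal_coupling i i = Num.min (a i) (b i).
Proof. by rewrite mxE eqxx mul1r subr_min_mul0 mul0r addr0. Qed.

Hypotheses (a0 : forall i, 0 <= a i) (b0 : forall i, 0 <= b i).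
Hypothesis mass_ab : \sum_(i < n) a i = \sum_(i < n) b i.

Let ra0 i : 0 <= ra i. Proof. by rewrite subr_ge0 ge_min lexx. Qed.
Let rb0 i : 0 <= rb i. Proof. by rewrite subr_ge0 ge_min lexx orbT. Qed.

Let mass_residual : \sum_(i < n) rb i = \sum_(i < n) ra i.
Proof. by rewrite !sumrB mass_ab. Qed.

Lemma maximal_coupling_coupling : coupling a b maximal_coupling.
Proof.
split; [|split].
- move=> i j; rewrite mxE addr_ge0 ?divr_ge0 ?mulr_ge0 ?sumr_ge0 //.
  by rewrite le_min a0 b0.
- move=> i; under eq_bigr do rewrite mxE.
  rewrite big_split /= (bigD1 i) //= eqxx mul1r big1 ?addr0; last first.
    by move=> j /negbTE; rewrite eq_sym => ->; rewrite mul0r.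
  rewrite -mulr_suml -mulr_sumr mass_residual -mulrA psumr_mulfV //.
  by rewrite addrC subrK.
- move=> j; under eq_bigr do rewrite mxE.
  rewrite big_split /= (bigD1 j) //= eqxx mul1r big1 ?addr0; last first.
    by move=> i /negbTE ->; rewrite mul0r.
  rewrite -!mulr_suml -mass_residual [_ * rb j]mulrC -mulrA psumr_mulfV //.
  by rewrite addrC subrK.
Qed.

End MaximalCoupling.

Lemma frob_diag_ge (R : realFieldType) (n : nat) (a b : 'I_n -> R)
    (C p : 'M[R]_n) :
  (forall i j : 'I_n, i != j -> C i j = 0) -> (forall i : 'I_n, C i i <= 0) ->
  coupling a b p ->
  \sum_(i < n) Num.min (a i) (b i) * C i i <= frob C p.
Proof.
move=> Cdiag Cle0 pab; rewrite frob_diag //; apply: ler_sum => i _.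
by rewrite mulrC ler_wnM2l ?coupling_diag_le_min.
Qed.

Theorem lemma1 (R : realFieldType) (n : nat) (alpha beta : 'I_n -> R)
  (C : 'M[R]_n) :
  prob_vec alpha -> prob_vec beta ->
  (forall i j : 'I_n, i != j -> C i j = 0) ->
  (forall i : 'I_n, C i i <= 0) ->
  (exists p : 'M[R]_n, coupling alpha beta p /\
     frob C p = \sum_(i < n) Num.min (alpha i) (beta i) * C i i) /\
  (forall p : 'M[R]_n, coupling alpha beta p ->
     \sum_(i < n) Num.min (alpha i) (beta i) * C i i <= frob C p).
Proof.
move=> [alpha0 alpha1] [beta0 beta1] Cdiag Cle0.
split; last by move=> p; exact: frob_diag_ge.
exists (maximal_coupling alpha beta); split.
  by apply: maximal_coupling_coupling; rewrite ?alpha1 ?beta1.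
rewrite frob_diag //; apply: eq_bigr => i _.
by rewrite maximal_coupling_diag mulrC.
Qed.
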